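(* Let $\Phi$ be a (crystallographic) root system with affine Weyl group $\widetilde W$, let $\Lambda=\langle\Phi^\vee\rangle$ be the coroot lattice, and let $T=\mathfrak h/\Lambda$, where $\mathfrak h$ is a Cartan subalgebra of the semisimple complex Lie algebra associated to $\Phi$. For each positive root $\alpha\in\Phi^+$ let $e^\alpha:T\to\mathbb C/\mathbb Z\cong\mathbb C^*$ be the character induced by $\alpha$. Then the toric arrangement $\mathcal T_{\widetilde W}=\{H_{e^\alpha}\mid \alpha\in\Phi^+\}$, $H_{e^\alpha}=\{t\in T\mid e^\alpha(t)=1\}$, is thick.
   Context: The universal covering is $\pi:\mathfrak h\to\mathfrak h/\Lambda=T$; its real part $\pi:V_{\mathbb R}\to T_{\mathbb R}$ and the associated periodic real affine arrangement $\mathcal A_{X,\mathbb R}$ (all real hyperplanes whose complexification maps onto some $H_{e^\alpha}$; here it is the arrangement of reflection hyperplanes of $\widetilde W$) are defined as usual. A chamber of $\mathcal A_{X,\mathbb R}$ is a connected component of the complement of its hyperplanes in $V_{\mathbb R}$. Definition: a toric arrangement is thick if $\pi$ is injective on the closure of every chamber of the associated real affine arrangement $\mathcal A_{X,\mathbb R}$. *)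

From HB Require Import structures.
From mathcomp Require Import all_boot all_order all_algebra.
From mathcomp Require Import all_classical all_reals all_analysis.
Set Implicit Arguments. Unset Strict Implicit. Unset Printing Implicit Defensive.
Import Order.TTheory GRing.Theory Num.Theory.
Import numFieldNormedType.Exports.
Local Open Scope classical_set_scope.
Local Open Scope ring_scope.

Definition dotv (R : realType) (n : nat) (u v : 'rV[R]_n) : R := (u *m v^T) 0 0.

Definition cartan (R : realType) (n : nat) (b a : 'rV[R]_n) : R :=
  2 * dotv b a / dotv a a.

Definition coroot (R : realType) (n : nat) (a : 'rV[R]_n) : 'rV[R]_n :=
  (2 / dotv a a) *: a.

(* Phi (a finite list of vectors) is a reduced crystallographic root system
   spanning V_R = R^n (semisimple case: T = h / Lambda is a compact torus). *)
Definition is_root_system (R : realType) (n : nat) (Phi : seq 'rV[R]_n) : Prop :=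
  [/\ (0 \notin Phi),
      (forall v : 'rV[R]_n, exists c : 'rV[R]_n -> R, v = \sum_(a <- Phi) c a *: a),
      (forall a b, a \in Phi -> b \in Phi -> b - cartan b a *: a \in Phi),
      (forall a b, a \in Phi -> b \in Phi -> exists k : int, cartan b a = k%:~R) &
      (forall a (c : R), a \in Phi -> c *: a \in Phi -> c = 1 \/ c = -1)].

Definition in_coroot_lattice (R : realType) (n : nat) (Phi : seq 'rV[R]_n)
    (v : 'rV[R]_n) : Prop :=
  exists c : 'rV[R]_n -> int, v = \sum_(a <- Phi) (c a)%:~R *: coroot a.

(* The associated periodic real affine arrangement A_{X,R}: all real hyperplanes
   {x | (a, x) = k}, a in Phi, k in Z (those mapping onto some H_{e^a}). *)
Definition arr_complement (R : realType) (n : nat) (Phi : seq 'rV[R]_n) : set 'rV[R]_n :=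
  [set x | forall a, a \in Phi -> forall k : int, dotv a x != k%:~R].

Definition is_chamber (R : realType) (n : nat) (Phi : seq 'rV[R]_n)
    (C : set 'rV[R]_n) : Prop :=
  exists2 x, arr_complement Phi x & C = connected_component (arr_complement Phi) x.

(* pi : V_R -> T_R = V_R / Lambda; pi x = pi y iff x - y in Lambda.
   Thick: pi injective on the closure of every chamber. *)
Definition thick (R : realType) (n : nat) (Phi : seq 'rV[R]_n) : Prop :=
  forall C : set 'rV[R]_n, is_chamber Phi C ->
  forall x y, closure C x -> closure C y -> in_coroot_lattice Phi (x - y) -> x = y.

From HB Require Import structures.
From mathcomp Require Import all_boot all_order all_algebra.
From mathcomp Require Import all_classical all_reals all_analysis.
From mathcomp Require Import ring lra zify.
Set Implicit Arguments. Unset Strict Implicit. Unset Printing Implicit Defensive.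
Import Order.TTheory GRing.Theory Num.Theory.
Import numFieldNormedType.Exports.
Local Open Scope classical_set_scope.
Local Open Scope ring_scope.

(* For every root a the linear form (a, -) is continuous, so it maps a chamber onto
   an interval containing no integer; hence the closure of a chamber lies in a slab
   k <= (a, x) <= k + 1, and the difference lam of two of its points satisfies
   |(a, lam)| <= 1 for all roots a.  If lam is in the coroot lattice, write it as a
   sum of coroots of roots b_1, ..., b_m.  When (b_1, b_j) < 0 for some j, either
   b_j = -b_1 and the two terms cancel, or b_1^v + b_j^v is again a coroot; both
   shorten the sum.
   Otherwise (b_1, lam) >= (b_1, b_1^v) = 2, which is impossible, so the sum is empty
   and lam = 0. *)

Section InnerProduct.
Variables (R : realType) (n : nat).
Implicit Types u v w : 'rV[R]_n.

Lemma dotvE u v : dotv u v = \sum_i u 0 i * v 0 i.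
Proof. by rewrite /dotv mxE; apply: eq_bigr => i _; rewrite mxE. Qed.

Lemma dotvC u v : dotv u v = dotv v u.
Proof. by rewrite !dotvE; apply: eq_bigr => i _; rewrite mulrC. Qed.

Lemma dotvDr u v w : dotv u (v + w) = dotv u v + dotv u w.
Proof. by rewrite /dotv linearD mulmxDr mxE. Qed.

Lemma dotvZr u k v : dotv u (k *: v) = k * dotv u v.
Proof. by rewrite /dotv linearZ /= -scalemxAr mxE. Qed.

Lemma dotvNr u v : dotv u (- v) = - dotv u v.
Proof. by rewrite -scaleN1r dotvZr mulN1r. Qed.

Lemma dotvBr u v w : dotv u (v - w) = dotv u v - dotv u w.
Proof. by rewrite dotvDr dotvNr. Qed.

Lemma dotvZl u k v : dotv (k *: v) u = k * dotv v u.
Proof. by rewrite dotvC dotvZr dotvC. Qed.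

Lemma dotvBl u v w : dotv (v - w) u = dotv v u - dotv w u.
Proof. by rewrite dotvC dotvBr !(dotvC u). Qed.

Lemma dotvNl u v : dotv (- v) u = - dotv v u.
Proof. by rewrite dotvC dotvNr dotvC. Qed.

Lemma dotv_sumr (I : Type) (s : seq I) (F : I -> 'rV[R]_n) u :
  dotv u (\sum_(i <- s) F i) = \sum_(i <- s) dotv u (F i).
Proof. by rewrite /dotv linear_sum mulmx_sumr summxE. Qed.

Lemma dotvvE u : dotv u u = \sum_i u 0 i ^+ 2.
Proof. by rewrite dotvE; under eq_bigr do rewrite -expr2. Qed.

Lemma dotvv_ge0 u : 0 <= dotv u u.
Proof. by rewrite dotvvE sumr_ge0 // => i _; rewrite sqr_ge0. Qed.

Lemma dotvv_eq0 u : (dotv u u == 0) = (u == 0).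
Proof.
apply/idP/eqP => [|->]; last by rewrite dotvvE big1 // => i _; rewrite mxE expr0n.
rewrite dotvvE => /eqP /psumr_eq0P u0; apply/rowP => i; rewrite mxE.
by apply/eqP; rewrite -sqrf_eq0 u0 // => j _; exact: sqr_ge0.
Qed.

Lemma dotv_continuous u : continuous (dotv u).
Proof.
rewrite (_ : dotv u = fun v => \sum_i u 0 i * v 0 i); last by apply/funext => v; rewrite dotvE.
apply: continuous_big => [|i _ v]; first exact: add_continuous.
by apply: continuousM; [exact: cst_continuous | exact: coord_continuous].
Qed.
End InnerProduct.

Lemma int_free_interval_sub_floor (R : realType) (S : set R) r :
  is_interval S -> S r -> (forall z (m : int), S z -> z != m%:~R) ->
  S `<=` [set z | (Num.floor r)%:~R <= z <= (Num.floor r)%:~R + 1].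
Proof.
move=> iS Sr noint z Sz /=; set k := Num.floor r.
have rk : k%:~R < r by rewrite lt_neqAle floor_le eq_sym noint.
have rk1 : r < k%:~R + 1 by have := floorD1_gt r; rewrite intrD.
apply/andP; split; rewrite leNgt; apply/negP => zk.
  have Sk : S k%:~R by apply: (iS z r) => //; rewrite !ltW.
  by have /eqP := noint _ k Sk.
have Sk1 : S (k + 1)%:~R by apply: (iS r z) => //; rewrite intrD !ltW.
by have /eqP := noint _ (k + 1) Sk1.
Qed.

Lemma chamber_closure_slab (R : realType) n (Phi : seq 'rV[R]_n) C a :
  is_chamber Phi C -> a \in Phi ->
  exists k : int, forall z, closure C z -> k%:~R <= dotv a z <= k%:~R + 1.
Proof.
move=> [x0 Ax0 ->{C}] aPhi; set C := connected_component _ x0.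
have CPhi : C `<=` arr_complement Phi by exact: connected_component_sub.
have iC : is_interval (dotv a @` C).
  apply/connected_intervalP/connected_continuous_connected.
    exact: component_connected.
  exact/continuous_subspaceT/dotv_continuous.
have /= slabC := int_free_interval_sub_floor iC (imageP _ (connected_component_refl Ax0)).
exists (Num.floor (dotv a x0)) => z; set k := Num.floor _.
have slab_closed : closed [set z | k%:~R <= dotv a z <= k%:~R + 1].
  rewrite (_ : [set z | _] = dotv a @^-1` [set r | k%:~R <= r] `&`
                            dotv a @^-1` [set r | r <= k%:~R + 1]).
    by apply: closedI; apply: closed_comp => [? _|];
      [exact: dotv_continuous | exact: closed_ge | exact: dotv_continuous | exact: closed_le].
  by apply/seteqP; split => ? /= /andP.
have C_slab : C `<=` [set z | k%:~R <= dotv a z <= k%:~R + 1].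
  move=> w Cw; apply: (slabC _ (dotv a w)); last by exists w.
  by move=> _ m [v Cv <-]; exact: CPhi.
by move=> /(closureS C_slab); rewrite -(closure_id _).1.
Qed.

Section Coroots.
Variables (R : realType) (n : nat).
Implicit Types a b : 'rV[R]_n.

Lemma cartanvv a : a != 0 -> cartan a a = 2.
Proof. by rewrite -dotvv_eq0 /cartan => a0; field. Qed.

Lemma dotv_coroot b a : dotv b (coroot a) = cartan b a.
Proof. by rewrite /coroot dotvZr /cartan mulrAC. Qed.

Lemma corootN a : coroot (- a) = - coroot a.
Proof. by rewrite /coroot dotvNl dotvNr opprK scalerN. Qed.

Lemma coroot_reflect a b : a != 0 -> b != 0 ->
  coroot (b - cartan b a *: a) = coroot b - cartan a b *: coroot a.
Proof.
rewrite -!dotvv_eq0 /coroot => a0 b0.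
have -> : dotv (b - cartan b a *: a) (b - cartan b a *: a) = dotv b b.
  by rewrite !(dotvBl, dotvBr, dotvZl, dotvZr) (dotvC a b) /cartan; field.
rewrite /cartan scalerBr !scalerA (dotvC a b).
by congr (_ *: _ - _ *: _); field; apply/andP.
Qed.

Lemma dotv_coroot_sum_ge2 b bs : b != 0 -> (forall c, c \in bs -> 0 <= dotv b c) ->
  2 <= dotv b (\sum_(c <- b :: bs) coroot c).
Proof.
move=> b0 bs_acute; rewrite big_cons dotvDr dotv_coroot cartanvv // lerDl dotv_sumr.
rewrite big_seq sumr_ge0 // => c cbs; rewrite dotv_coroot /cartan.
by rewrite divr_ge0 ?mulr_ge0 ?bs_acute ?dotvv_ge0.
Qed.

End Coroots.

Section RootSystem.
Variables (R : realType) (n : nat) (Phi : seq 'rV[R]_n).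
Hypothesis Phi_root_system : is_root_system Phi.
Implicit Types a b : 'rV[R]_n.

Lemma root_neq0 a : a \in Phi -> a != 0.
Proof. by case: Phi_root_system => Phi0 _ _ _ _; apply: contraTneq => ->. Qed.

Lemma dotv_root_gt0 a : a \in Phi -> 0 < dotv a a.
Proof. by move/root_neq0; rewrite lt_def dotvv_eq0 dotvv_ge0 andbT. Qed.

Lemma rootN a : a \in Phi -> - a \in Phi.
Proof.
case: Phi_root_system => _ _ reflect_closed _ _ aPhi.
have := reflect_closed a a aPhi aPhi.
by rewrite cartanvv ?root_neq0 // scaler_nat mulr2n opprD addNKr.
Qed.

Lemma dotv_roots_sqr_lt a b : a \in Phi -> b \in Phi -> b != a -> b != - a ->
  dotv a b ^+ 2 < dotv a a * dotv b b.
Proof.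
move=> aPhi bPhi nba nbNa; set A := dotv a a; set B := dotv b b; set D := dotv a b.
have B0 : B != 0 by rewrite dotvv_eq0 root_neq0.
set w := B *: a - D *: b.
have ww : dotv w w = B * (A * B - D ^+ 2).
  by rewrite /w !(dotvBl, dotvBr, dotvZl, dotvZr) (dotvC b a) -/A -/B -/D; ring.
have disc_ge0 : 0 <= A * B - D ^+ 2.
  by have := dotvv_ge0 w; rewrite ww pmulr_rge0 // dotv_root_gt0.
rewrite -subr_gt0 lt_def disc_ge0 andbT; apply/eqP => disc0.
have : B *: a - D *: b == 0 by rewrite -dotvv_eq0 -/w ww disc0 mulr0.
rewrite subr_eq0 => /eqP BaDb.
have ab : a = (D / B) *: b.
  by apply: (scalerI B0); rewrite BaDb scalerA mulrCA mulfV ?mulr1.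
case: Phi_root_system => _ _ _ _ reduced.
rewrite ab in aPhi nba nbNa.
have [e|e] := reduced b (D / B) bPhi aPhi; move: nba nbNa; rewrite e.
  by rewrite scale1r eqxx.
by rewrite scaleN1r opprK eqxx.
Qed.

Lemma coroot_add_obtuse a b : a \in Phi -> b \in Phi -> dotv a b < 0 -> b != - a ->
  exists2 c, c \in Phi & coroot a + coroot b = coroot c.
Proof.
move=> aPhi bPhi ab_lt0 nbNa.
have Apos := dotv_root_gt0 aPhi; have Bpos := dotv_root_gt0 bPhi.
have nba : b != a by apply: contraTneq ab_lt0 => ->; rewrite -leNgt ltW.
have cs := dotv_roots_sqr_lt aPhi bPhi nba nbNa.
case: Phi_root_system => _ _ reflect_closed integral _.
have [p eabp] := integral b a bPhi aPhi; have [q ebaq] := integral a b aPhi bPhi.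
have p_lt0 : p < 0.
  by rewrite -(ltr_int R) -eabp /cartan pmulr_llt0 ?invr_gt0 // pmulr_rlt0.
have q_lt0 : q < 0.
  by rewrite -(ltr_int R) -ebaq /cartan (dotvC b a) pmulr_llt0 ?invr_gt0 // pmulr_rlt0.
(* [<a,b^v> <b,a^v> = 4 (a,b)^2 / ((a,a)(b,b)) < 4], so one of the two negative integers is -1. *)
have pq_lt4 : p * q < 4.
  rewrite -(ltr_int R) intrM -eabp -ebaq /cartan (dotvC b a).
  have -> : 2 * dotv a b / dotv b b * (2 * dotv a b / dotv a a) =
            4 * (dotv a b ^+ 2 / (dotv a a * dotv b b)).
    by field; rewrite !lt0r_neq0.
  by rewrite -[X in _ < X]mulr1 ltr_pM2l // ltr_pdivrMr ?mul1r ?mulr_gt0.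
have [p1|q1] : p = -1 \/ q = -1 by lia.
  exists (b - cartan b a *: a); first exact: reflect_closed.
  by rewrite coroot_reflect ?root_neq0 // eabp p1 scaleN1r opprK addrC.
exists (a - cartan a b *: b); first exact: reflect_closed.
by rewrite coroot_reflect ?root_neq0 // ebaq q1 scaleN1r opprK.
Qed.

Lemma coroot_sum_eq0 bs : all (mem Phi) bs ->
  (forall a, a \in Phi -> `|dotv a (\sum_(b <- bs) coroot b)| <= 1) ->
  \sum_(b <- bs) coroot b = 0.
Proof.
elim: {bs}(size bs).+1 {-2}bs (ltnSn (size bs)) => // m IH [|b bs] /=.
  by rewrite big_nil.
rewrite ltnS => size_bs /andP [bPhi bsPhi] small.
have [/hasP [c cbs bc_lt0] | /hasPn bs_not_obtuse] := boolP (has (fun c => dotv b c < 0) bs).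
  have cPhi : c \in Phi := allP bsPhi c cbs.
  have remPhi : all (mem Phi) (rem c bs) by apply/allP => x /mem_rem; exact: allP.
  have size_bs_rem : size bs = (size (rem c bs)).+1 by rewrite (perm_size (perm_to_rem cbs)).
  have esum : \sum_(x <- b :: bs) coroot x =
              coroot b + coroot c + \sum_(x <- rem c bs) coroot x.
    by rewrite big_cons (perm_big _ (perm_to_rem cbs)) big_cons addrA.
  rewrite esum in small *; have [cNb|ncNb] := eqVneq c (- b).
    have bc0 : coroot b + coroot c = 0 by rewrite cNb corootN subrr.
    rewrite bc0 add0r in small *; apply: IH => //.
    by apply: leq_trans size_bs; rewrite size_bs_rem leqnSn.
  have [d dPhi bcd] := coroot_add_obtuse bPhi cPhi bc_lt0 ncNb.
  rewrite bcd in small *; have := IH (d :: rem c bs); rewrite big_cons.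
  by apply; rewrite /= -?size_bs_rem ?dPhi.
have bs_acute c : c \in bs -> 0 <= dotv b c by move/bs_not_obtuse; rewrite -leNgt.
exfalso; have := small b bPhi; have := dotv_coroot_sum_ge2 (root_neq0 bPhi) bs_acute.
by have := ler_norm (dotv b (\sum_(c <- b :: bs) coroot c) : R); lra.
Qed.

Lemma intr_scale_coroot_sum (k : int) a : a \in Phi ->
  exists2 bs, all (mem Phi) bs & k%:~R *: coroot a = \sum_(b <- bs) coroot b.
Proof.
move=> aPhi; case: k => m.
  exists (nseq m a); first by apply/allP => _ /nseqP [->].
  by rewrite big_nseq iter_addr_0 scaler_nat.
exists (nseq m.+1 (- a)); first by apply/allP => _ /nseqP [-> _]; exact: rootN.
by rewrite big_nseq iter_addr_0 NegzE intrN scaleNr scaler_nat corootN mulNrn.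
Qed.

Lemma coroot_lattice_coroot_sum v : in_coroot_lattice Phi v ->
  exists2 bs, all (mem Phi) bs & v = \sum_(b <- bs) coroot b.
Proof.
case=> c ->.
suff coroot_combination_sum s : all (mem Phi) s -> exists2 bs, all (mem Phi) bs &
    \sum_(a <- s) (c a)%:~R *: coroot a = \sum_(b <- bs) coroot b.
  by apply/coroot_combination_sum/allP.
elim: s => [|a s IH] /=; first by exists [::]; rewrite ?big_nil.
case/andP => /(intr_scale_coroot_sum (c a)) [bs1 bs1Phi e1] /IH [bs2 bs2Phi e2].
by exists (bs1 ++ bs2); rewrite ?all_cat ?bs1Phi // big_cons big_cat e1 e2.
Qed.

End RootSystem.

Theorem mainTheorem4 (R : realType) (n : nat) (Phi : seq 'rV[R]_n) :
  is_root_system Phi -> thick Phi.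
Proof.
move=> Phi_rs C chamberC x y Cx Cy /(coroot_lattice_coroot_sum Phi_rs) [bs bsPhi exy].
apply/subr0_eq; rewrite exy; apply: (coroot_sum_eq0 Phi_rs) => // a aPhi.
have [k slab] := chamber_closure_slab chamberC aPhi.
have /andP [kx xk] := slab x Cx; have /andP [ky yk] := slab y Cy.
by rewrite -exy dotvBr ler_norml; apply/andP; split; lra.
Qed.
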